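(* Let $\mathcal{B}$ be a linear-quadratic algebra over $R$ with intrinsic grading as described below, and let $\mathcal{B}^!$ be its quadratic dual with differential $\mu_1$. Define $\delta':R\to\mathcal{B}^!\otimes_R\mathcal{B}^{op}$ by \[ \delta'(e)=\sum_{i:\ e_L(b_i)=e}b_i^*\otimes(b_i)^{op} \] for each elementary idempotent $e$. Then $\delta'$ satisfies the rank-one Type DD structure relations: writing $\delta'(1)=\sum_s a_s\otimes c_s^{op}$, \[ \sum_s(-1)^{\deg_h c_s}\mu_1(a_s)\otimes c_s^{op}+\sum_s a_s\otimes\mu_1(c_s)^{op}+\sum_{s,t}(-1)^{\deg_h(a_t)\deg_h(c_s)}a_sa_t\otimes c_t^{op}c_s^{op}=0 \] in $\mathcal{B}^!\otimes_R\mathcal{B}^{op}$ (where $c_t^{op}c_s^{op}=(c_sc_t)^{op}$).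
   Context: $R=\mathbb{Z}e_1\times\cdots\times\mathbb{Z}e_k$. $\mathcal{B}$ is a unital associative $R$-algebra with a finite set of multiplicative generators $b_1<\dots<b_m$, each with a unique left idempotent $e_L(b_i)$ and right idempotent $e_R(b_i)$. Let $V$ be the free abelian group on the $b_i$ (an $R$-bimodule), $T(V)=\bigoplus_{k\ge0}V^{\otimes_Rk}$, $\mathcal{B}=T(V)/J$, with $J\cap V=0$ and $J=T(V)J_2T(V)$, $J_2=J\cap(V\oplus V\otimes_RV)$ (linear-quadratic). Let $I\subset V\otimes_RV$ be the projection of $J_2$ and $\varphi:I\to V$ the map with $\varphi(r)\oplus r\in J_2$. $\mathcal{B}$ has an intrinsic grading with generators homogeneous, $I$ generated by homogeneous elements, $\varphi$ degree preserving; $\mathcal{B}$ is in homological degree $0$ with zero differential. Quadratic dual: $V^*=\mathrm{Hom}_{\mathbb{Z}}(V,\mathbb{Z})$ with dual basis $b_i^*$ (same idempotents as $b_i$), $I^\perp\subset V^*\otimes_RV^*$ the annihilator of $I$, $\mathcal{B}^!=T(V^* )/(T(V^* )I^\perp T(V^* ))$, $b_i^*$ in bidegree $(-\deg b_i,1)$. As in the paper, the degree-$2$ part $(V^*\otimes_RV^* )/I^\perp$ is identified with $I^*=\mathrm{Hom}_{\mathbb{Z}}(I,\mathbb{Z})$ by restriction, and $\mu_1(v^* )=\varphi^*(v^* )$ on generators, extended by $\mu_1(xy)=(-1)^{\deg_h x}\mu_1(x)y+x\mu_1(y)$. The differential on $\mathcal{B}$ (and on $\mathcal{B}^{op}$)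 is zero. *)

From Stdlib Require List.
From mathcomp Require Import all_boot all_algebra.
Set Implicit Arguments. Unset Strict Implicit. Unset Printing Implicit Defensive.
Import GRing.Theory.
Local Open Scope ring_scope.

Section LQ.
Variables (k m : nat) (eL eR : 'I_m -> 'I_k).

(* A Z-basis element of T(V) = (+)_n V^{(x)_R n}: a path (e, [:: i1; ...; in])
   starting at the idempotent e; n = 0 gives the idempotent e itself. *)
Definition path_t := ('I_k * seq 'I_m)%type.

Definition valid (p : path_t) : bool :=
  if p.2 is i :: w then (eL i == p.1) && path (fun a b => eR a == eL b) i w
  else true.

Definition tgt (p : path_t) : 'I_k := last p.1 (map eR p.2).

(* elements of T(V) (and of T(V^* ), which has the same quiver since b_i^*
   has the same idempotents as b_i): integer coefficient functions on paths *)
Definition TV := path_t -> int.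
Definition tv0 : TV := fun _ => 0.
Definition tvadd (x y : TV) : TV := fun p => x p + y p.
Definition tvscale (n : int) (x : TV) : TV := fun p => n * x p.
Definition tveq (x y : TV) : Prop := forall p, x p = y p.

Definition tvmul (x y : TV) : TV := fun p =>
  \sum_(n < (size p.2).+1)
     x (p.1, take n p.2) * y (tgt (p.1, take n p.2), drop n p.2).

Definition basis (p : path_t) : TV := fun q => if q == p then 1 else 0.
Definition gen (i : 'I_m) : TV := basis (eL i, [:: i]).

Definition supported_on (P : pred path_t) (x : TV) : Prop :=
  forall p, x p != 0 -> P p.
Definition inV (x : TV) : Prop := supported_on (fun p => valid p && (size p.2 == 1)%N) x.
Definition inVV (x : TV) : Prop := supported_on (fun p => valid p && (size p.2 == 2)%N) x.

Definition coefV (i : 'I_m) (x : TV) : int := x (eL i, [:: i]).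

Definition pairing (x y : TV) : int :=
  \sum_(i < m) \sum_(j < m) x (eL i, [:: i; j]) * y (eL i, [:: i; j]).

Definition span_TV (S : TV -> Prop) (x : TV) : Prop :=
  exists l : seq (int * TV), (forall y, List.In y l -> S y.2) /\
    tveq x (foldr (fun y acc => tvadd (tvscale y.1 y.2) acc) tv0 l).

Definition J_gen (I : TV -> Prop) (phi : TV -> TV) (z : TV) : Prop :=
  exists u v r, [/\ valid u, valid v, I r &
    tveq z (tvmul (basis u) (tvmul (tvadd (phi r) r) (basis v)))].
Definition J_ideal I phi := span_TV (J_gen I phi).

Definition Iperp (I : TV -> Prop) (x : TV) : Prop :=
  inVV x /\ forall r, I r -> pairing x r = 0.

Definition Dual_gen (I : TV -> Prop) (z : TV) : Prop :=
  exists a a' x, [/\ valid a, valid a', Iperp I x &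
    tveq z (tvmul (basis a) (tvmul x (basis a')))].
Definition Dual_ideal I := span_TV (Dual_gen I).

(* T(V^* ) (x)_R T(V)^op : Z-combinations of pairs (p, q) of paths with the
   same right idempotent (p e (x) q^op = p (x) e q^op = p (x) (q e)^op). *)
Definition TT := (path_t * path_t) -> int.
Definition tt0 : TT := fun _ => 0.
Definition ttadd (x y : TT) : TT := fun p => x p + y p.
Definition ttscale (n : int) (x : TT) : TT := fun p => n * x p.
Definition tteq (x y : TT) : Prop := forall p, x p = y p.
Definition tens (a c : TV) : TT := fun pq =>
  if tgt pq.1 == tgt pq.2 then a pq.1 * c pq.2 else 0.

Definition span_TT (S : TT -> Prop) (x : TT) : Prop :=
  exists l : seq (int * TT), (forall y, List.In y l -> S y.2) /\
    tteq x (foldr (fun y acc => ttadd (ttscale y.1 y.2) acc) tt0 l).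

(* B^! (x)_R B^op = (T(V^* ) (x)_R T(V)^op) / K, where K is spanned by
   (Dual ideal) (x) T(V)^op and T(V^* ) (x) J^op *)
Definition K_gen (I : TV -> Prop) (phi : TV -> TV) (z : TT) : Prop :=
  (exists x c, [/\ valid c, Dual_ideal I x & tteq z (tens x (basis c))]) \/
  (exists a y, [/\ valid a, J_ideal I phi y & tteq z (tens (basis a) y)]).
Definition zero_in_BdualB I phi (z : TT) : Prop := span_TT (K_gen I phi) z.


Variables (G : Type) (gmul : G -> G -> G) (deg : 'I_m -> G).
Definition homog1 (g : G) (x : TV) : Prop :=
  inV x /\ forall i, x (eL i, [:: i]) != 0 -> deg i = g.
Definition homog2 (g : G) (y : TV) : Prop :=
  inVV y /\ forall i j, y (eL i, [:: i; j]) != 0 -> gmul (deg i) (deg j) = g.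
End LQ.

Definition hdegB : nat := 0.
Definition hdegBdual : nat := 1.

(* The sum  sum_{i,j} b_i^* b_j^* (x) b_i b_j  is the canonical element of
   (V^* (x) V^* ) (x) (V (x) V).  The relation group I is a subgroup of the
   free abelian group V (x) V, so it has a finite spanning family R_a with
   additive coordinate functionals; since (V^* (x) V^* )/I^perp = I^*, these
   functionals are pairings with some X_a in V^* (x) V^*.  Modulo
   I^perp (x) T(V), the canonical element is therefore congruent to
   sum_a X_a (x) R_a, and  sum_i mu_1(b_i^* ) (x) b_i  to  sum_a X_a (x) phi(R_a).
   As B sits in homological degree 0 all signs are +1 and mu_1 vanishes on B,
   so the left side of the relation is congruent to sum_a X_a (x) (phi(R_a) + R_a),
   which lies in T(V^* ) (x) J. *)

From Stdlib Require List.
From Stdlib Require Import Classical FunctionalExtensionality IndefiniteDescription Wf_nat.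
From mathcomp Require Import all_boot all_algebra zify ring.
Set Implicit Arguments. Unset Strict Implicit. Unset Printing Implicit Defensive.
Import GRing.Theory Num.Theory.
Local Open Scope ring_scope.

Section IntegerValuedFunctions.
Variable T : Type.
Implicit Types (x y : T -> int) (S : (T -> int) -> Prop).

Definition zzero : T -> int := fun _ => 0.
Definition zadd x y : T -> int := fun p => x p + y p.
Definition zscale (c : int) x : T -> int := fun p => c * x p.
Definition zsub x y : T -> int := fun p => x p - y p.
Definition zcomb n (c : 'I_n -> int) (x : 'I_n -> T -> int) : T -> int :=
  \big[zadd/zzero]_(a < n) zscale (c a) (x a).

(* [span_TV] and [span_TT] are instances of [zspan], up to conversion. *)
Definition zspan S x := exists l : seq (int * (T -> int)),
  (forall z, List.In z l -> S z.2) /\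
  forall p, x p = foldr (fun z acc => zadd (zscale z.1 z.2) acc) zzero l p.

Lemma zspan0 S : zspan S zzero.
Proof. by exists [::]. Qed.

Lemma zspan_gen S x : S x -> zspan S x.
Proof.
move=> Sx; exists [:: (1, x)]; split=> [y [<-|[]]|p] //=.
by rewrite /zadd /zscale mul1r addr0.
Qed.

Lemma zspan_ext S x y : (forall p, x p = y p) -> zspan S x -> zspan S y.
Proof. by move=> E [l [Sl El]]; exists l; split=> // p; rewrite -E. Qed.

Lemma zspan_add S x y : zspan S x -> zspan S y -> zspan S (zadd x y).
Proof.
move=> [l1 [S1 E1]] [l2 [S2 E2]]; exists (l1 ++ l2); split.
  by move=> z /(List.in_app_or l1 l2)[]; [apply: S1 | apply: S2].
move=> p; rewrite /zadd E1 E2; elim: l1 {S1 E1} => [|w l IH] /=.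
  by rewrite add0r.
by rewrite /zadd -IH addrA.
Qed.

Lemma zspan_scale S c x : zspan S x -> zspan S (zscale c x).
Proof.
move=> [l [Sl El]]; exists [seq (c * w.1, w.2) | w <- l]; split.
  by move=> z /List.in_map_iff[w [<- /Sl]].
move=> p; rewrite /zscale El; elim: l {Sl El} => [|w l IH] /=.
  by rewrite mulr0.
by rewrite /zadd /zscale -IH mulrDr mulrA.
Qed.

Lemma zsumE (I : Type) (r : seq I) (F : I -> T -> int) p :
  (\big[zadd/zzero]_(a <- r) F a) p = \sum_(a <- r) F a p.
Proof. by elim/big_rec2: _ => // a y1 y2 _ <-. Qed.

Lemma zsum2E (I J : Type) (r : seq I) (s : seq J) (F : I -> J -> T -> int) p :
  (\big[zadd/zzero]_(i <- r) \big[zadd/zzero]_(j <- s) F i j) p =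
  \sum_(i <- r) \sum_(j <- s) F i j p.
Proof. by rewrite zsumE; apply: eq_bigr => i _; rewrite zsumE. Qed.

Lemma zspan_sum S (I : Type) (r : seq I) (F : I -> T -> int) :
  (forall a, zspan S (F a)) -> zspan S (\big[zadd/zzero]_(a <- r) F a).
Proof. by move=> SF; elim/big_ind: _ => //; [apply: zspan0 | apply: zspan_add]. Qed.

Lemma zcombE n (c : 'I_n -> int) (x : 'I_n -> T -> int) p :
  zcomb c x p = \sum_(a < n) c a * x a p.
Proof. exact: zsumE. Qed.

Lemma zspan_comb S n (c : 'I_n -> int) (x : 'I_n -> T -> int) :
  (forall a, zspan S (x a)) -> zspan S (zcomb c x).
Proof. by move=> Sx; apply: zspan_sum => a; apply: zspan_scale. Qed.

End IntegerValuedFunctions.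

Arguments zzero {T}.
Arguments zadd {T}.

Section FiniteRankSubgroups.
Variable T : eqType.
Implicit Types (r s : T -> int) (S : (T -> int) -> Prop).

Definition zsubgroup S :=
  [/\ S zzero, forall r s, S r -> S s -> S (zadd r s)
    & forall c r, S r -> S (zscale c r)].

Lemma zsubgroup_generator S q : zsubgroup S ->
  exists2 s0, S s0 & forall r, S r -> (s0 q %| r q)%Z.
Proof.
move=> [S0 SD SZ].
have [[r0 Sr0 r0q]|S_q0] := classic (exists2 r, S r & r q != 0); last first.
  exists zzero => // r Sr; suff -> : r q = 0 by [].
  by apply/eqP/negPn/negP => rq; apply: S_q0; exists r.
(* s0 q is the least positive value taken at q *)
pose P j := exists2 r, S r & r q = j.+1%:Z.
have [j0 Pj0] : exists j, P j.
  exists `|r0 q|.-1; case: (ltrgtP (r0 q) 0) => [lt0|gt0|eq0]; last by rewrite eq0 in r0q.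
    by exists (zscale (-1) r0); [apply: SZ | rewrite /zscale; lia].
  by exists r0 => //; lia.
have [d [[[s0 Ss0 s0q] dmin] _]] :=
  dec_inh_nat_subset_has_unique_least_element _ (fun j => classic (P j)) (ex_intro _ j0 Pj0).
exists s0 => // r Sr; apply/dvdz_mod0P; apply: NNPP => rem_neq0.
pose rem := zadd r (zscale (- (r q %/ s0 q)%Z) s0).
have remE : rem q = (r q %% s0 q)%Z.
  by rewrite /rem /zadd /zscale {1}(divz_eq (r q) (s0 q)); ring.
have rem_ge0 : 0 <= (r q %% s0 q)%Z by apply: modz_ge0; rewrite s0q.
have rem_lt : (r q %% s0 q)%Z < s0 q by apply: ltz_pmod; rewrite s0q.
have /dmin/leP : P `|rem q|.-1.
  by exists rem; [apply: SD => //; apply: SZ | rewrite remE; lia].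
by rewrite remE; rewrite s0q in rem_lt; lia.
Qed.

Lemma zsubgroup_coordinates (Q : seq T) S : zsubgroup S ->
  (forall r p, S r -> p \notin Q -> r p = 0) ->
  exists n (F : 'I_n -> (T -> int) -> int) (R : 'I_n -> T -> int),
  [/\ forall a r s, S r -> S s -> F a (zadd r s) = F a r + F a s,
       forall a, S (R a)
     & forall r p, S r -> r p = \sum_(a < n) F a r * R a p].
Proof.
elim: Q S => [|q Q IH] S HS Ssupp.
  exists 0%N, (fun _ _ => 0), (fun _ => zzero).
  by split=> // [a|r p Sr]; [case: HS | rewrite big_ord0 Ssupp].
have [s0 Ss0 s0_dvd] := zsubgroup_generator q HS.
case: HS => S0 SD SZ.
pose g r := (r q %/ s0 q)%Z.
(* subtracting g r copies of s0 moves r into the subgroup S' of functions vanishing at q *)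
pose h r := zadd r (zscale (- g r) s0).
pose S' r := S r /\ r q = 0.
have gD r s : S r -> S s -> g (zadd r s) = g r + g s.
  by move=> Sr Ss; rewrite /g /zadd divzDl ?s0_dvd.
have hD r s : S r -> S s -> h (zadd r s) = zadd (h r) (h s).
  move=> Sr Ss; apply: functional_extensionality => p.
  by rewrite /h gD // /zadd /zscale; ring.
have S'h r : S r -> S' (h r).
  move=> Sr; split; first by apply: SD => //; apply: SZ.
  by rewrite /h /zadd /zscale mulNr divzK ?subrr ?s0_dvd.
have [|r p [Sr rq0]|n [F [R [FD S'R Fdec]]]] := IH S'.
- split=> [|r s [Sr rq] [Ss sq]|c r [Sr rq]]; first by split.
    by split; [apply: SD | rewrite /zadd rq sq addr0].
  by split; [apply: SZ | rewrite /zscale rq mulr0].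
- move=> pQ; case: (eqVneq p q) => [->//|pq].
  by apply: Ssupp; rewrite // in_cons negb_or pq.
exists n.+1, (fun a => if unlift ord0 a is Some b then F b \o h else g),
  (fun a => if unlift ord0 a is Some b then R b else s0).
split=> [a r s Sr Ss|a|r p Sr].
- case: (unlift ord0 a) => [i|] /=; last exact: gD.
  by rewrite hD // FD //; apply: S'h.
- by case: (unlift ord0 a) => [i|] //; case: (S'R i).
rewrite big_ord_recl unlift_none /=.
under eq_bigr => i _ do rewrite liftK.
rewrite -Fdec; last exact: S'h.
by rewrite /h /zadd /zscale; ring.
Qed.

End FiniteRankSubgroups.

Section PathAlgebra.
Variables (k m : nat) (eL eR : 'I_m -> 'I_k).

Definition path2 (i j : 'I_m) : path_t k m := (eL i, [:: i; j]).

Lemma tvmul_gen i j q : tvmul eR (gen eL i) (gen eL j) q =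
  if eR i == eL j then basis (path2 i j) q else 0.
Proof.
case: q => e w; rewrite /tvmul /gen /basis /path2 /=.
have [->|w_ne] := eqVneq w [:: i; j].
  have [nil_cons cons_nil] : ([::] == [:: i]) = false /\ ([:: j] == [::]) = false by [].
  rewrite !big_ord_recl big_ord0 /= !xpair_eqE /= !eqseq_cons !eqxx nil_cons cons_nil.
  by case: (e == eL i); case: (eR i == eL j); rewrite /= ?andbF ?mulr0 ?mul0r ?addr0.
rewrite xpair_eqE (negbTE w_ne) andbF if_same big1 // => n _.
case: eqP => [[_ wl]|_]; last by rewrite mul0r.
case: eqP => [[_ wr]|_]; last by rewrite mulr0.
by move: w_ne; rewrite -(cat_take_drop n w) wl wr eqxx.
Qed.

Lemma valid_path2 i j : valid eL eR (path2 i j) = (eR i == eL j).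
Proof. by rewrite /valid /= eqxx andbT. Qed.

Lemma supported_on_out (P : pred (path_t k m)) x p :
  supported_on P x -> ~~ P p -> x p = 0.
Proof. by move=> Px /negP nPp; apply/eqP; apply: contraT => /Px. Qed.

Lemma supported_onW (P : pred (path_t k m)) x :
  (forall p, ~~ P p -> x p = 0) -> supported_on P x.
Proof. by move=> Px p; apply: contraR => /Px ->. Qed.

Lemma supported_on0 (P : pred (path_t k m)) : supported_on P zzero.
Proof. by move=> p; rewrite eqxx. Qed.

Lemma supported_onD (P : pred (path_t k m)) x y :
  supported_on P x -> supported_on P y -> supported_on P (zadd x y).
Proof.
move=> Px Py; apply: supported_onW => p nPp.
by rewrite /zadd !(supported_on_out _ nPp) ?addr0.
Qed.

Lemma supported_onZ (P : pred (path_t k m)) c x :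
  supported_on P x -> supported_on P (zscale c x).
Proof.
move=> Px; apply: supported_onW => p nPp.
by rewrite /zscale (supported_on_out Px nPp) mulr0.
Qed.

Lemma supported_onB (P : pred (path_t k m)) x y :
  supported_on P x -> supported_on P y -> supported_on P (zsub x y).
Proof.
move=> Px Py; apply: supported_onW => p nPp.
by rewrite /zsub !(supported_on_out _ nPp) ?subr0.
Qed.

Lemma supported_on_comb (P : pred (path_t k m)) n c (x : 'I_n -> TV k m) :
  (forall a, supported_on P (x a)) -> supported_on P (zcomb c x).
Proof.
move=> Px; apply: (big_ind (supported_on P)) => [|y z|a _].
- exact: supported_on0.
- exact: supported_onD.
- exact/supported_onZ.
Qed.

Lemma tvmul_idem_r x e p :
  tvmul eR x (basis (e, [::])) p = (if tgt eR p == e then 1 else 0) * x p.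
Proof.
case: p => e0 w; rewrite /tvmul big_ord_recr /= take_size drop_size.
rewrite big1 ?add0r; last first.
  move=> [n ltn] _ /=; rewrite /basis; case: eqP => [[_ /(congr1 size)]|_].
    by rewrite size_drop /=; lia.
  by rewrite mulr0.
by rewrite /basis xpair_eqE eqxx andbT mulrC.
Qed.

Lemma tvmul_idem_l x e p :
  tvmul eR (basis (e, [::])) x p = (if p.1 == e then 1 else 0) * x p.
Proof.
case: p => e0 w; rewrite /tvmul big_ord_recl /= take0 drop0.
rewrite big1 ?addr0; last first.
  move=> [n ltn] _ /=; rewrite /basis; case: eqP => [[_ /(congr1 size)]|_].
    by rewrite size_take /bump /=; case: ifP => /=; lia.
  by rewrite mul0r.
by rewrite /basis xpair_eqE eqxx andbT.
Qed.

Lemma sum_indicator n (a : 'I_n) (F : 'I_n -> int) :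
  \sum_(e < n) (if a == e then 1 else 0) * F e = F a.
Proof.
rewrite (bigD1 a) //= eqxx mul1r big1 ?addr0 // => e.
by rewrite eq_sym => /negbTE ->; rewrite mul0r.
Qed.

Lemma idempotent_decomposition x p :
  x p = \sum_(e < k) \sum_(e' < k)
          tvmul eR (basis (e, [::])) (tvmul eR x (basis (e', [::]))) p.
Proof.
under eq_bigr => e _ do under eq_bigr => e' _ do rewrite tvmul_idem_l tvmul_idem_r.
by under eq_bigr => e _ do rewrite -big_distrr /= sum_indicator; rewrite sum_indicator.
Qed.

Lemma inVV_decomp r q : inVV eL eR r ->
  r q = \sum_(i < m) \sum_(j < m) r (path2 i j) * basis (path2 i j) q.
Proof.
move=> r_VV; have [rq0|/r_VV] := eqVneq (r q) 0.
  rewrite rq0 big1 // => i _; rewrite big1 // => j _; rewrite /basis.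
  by case: eqP => [<-|_]; rewrite ?rq0 ?mulr0.
case: q => e w /andP[+ size2]; case: w size2 => [|a [|b [|c w]]] //= _ /andP[/eqP /= <- _].
rewrite (bigD1 a) //= [X in X + _](bigD1 b) //= /basis /path2 !eqxx mulr1 big1 ?addr0.
  rewrite big1 ?addr0 // => i ia; rewrite big1 // => j _.
  by rewrite xpair_eqE !eqseq_cons (eq_sym a) (negbTE ia) !andbF mulr0.
by move=> j jb; rewrite xpair_eqE !eqseq_cons (eq_sym b) (negbTE jb) !andbF mulr0.
Qed.

Lemma inV_decomp x q : inV eL eR x -> x q = \sum_(i < m) coefV eL i x * gen eL i q.
Proof.
move=> x_V; have [xq0|/x_V] := eqVneq (x q) 0.
  rewrite xq0 big1 // => i _; rewrite /gen /basis /coefV.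
  by case: eqP => [<-|_]; rewrite ?xq0 ?mulr0.
case: q => e w /andP[+ size1]; case: w size1 => [|a [|b w]] //= _ /andP[/eqP /= <- _].
rewrite (bigD1 a) //= /gen /basis /coefV !eqxx mulr1 big1 ?addr0 // => i ia.
by rewrite xpair_eqE !eqseq_cons (eq_sym a) (negbTE ia) !andbF mulr0.
Qed.

Lemma inVV_gen_mul i j : inVV eL eR (tvmul eR (gen eL i) (gen eL j)).
Proof.
apply: supported_onW => p; rewrite tvmul_gen /basis; case: ifP => // ij.
by case: (p =P path2 i j) => // ->; rewrite /= valid_path2 ij.
Qed.

Lemma inVV_decomp_gen_mul r q : inVV eL eR r ->
  r q = \sum_(i < m) \sum_(j < m) r (path2 i j) * tvmul eR (gen eL i) (gen eL j) q.
Proof.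
move=> r_VV; rewrite (inVV_decomp q r_VV); apply: eq_bigr => i _; apply: eq_bigr => j _.
rewrite tvmul_gen; case: ifP => // ij.
by rewrite (supported_on_out r_VV) ?mul0r // valid_path2 ij.
Qed.

Lemma pairingB x y r : pairing eL (zsub x y) r = pairing eL x r - pairing eL y r.
Proof.
rewrite /pairing -sumrB; apply: eq_bigr => i _; rewrite -sumrB.
by apply: eq_bigr => j _; rewrite /zsub mulrBl.
Qed.

Lemma pairing_comb n c (x : 'I_n -> TV k m) r :
  pairing eL (zcomb c x) r = \sum_(a < n) c a * pairing eL (x a) r.
Proof.
rewrite /pairing; under [RHS]eq_bigr => a _ do rewrite big_distrr.
rewrite [RHS]exchange_big; apply: eq_bigr => i _ /=.
under [RHS]eq_bigr => a _ do rewrite big_distrr.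
rewrite [RHS]exchange_big; apply: eq_bigr => j _ /=.
by rewrite zcombE big_distrl; apply: eq_bigr => a _; rewrite mulrA.
Qed.

Lemma pairing_gen_mul i j r : inVV eL eR r ->
  pairing eL (tvmul eR (gen eL i) (gen eL j)) r = r (path2 i j).
Proof.
move=> r_VV; rewrite (inVV_decomp_gen_mul (path2 i j) r_VV) /pairing.
apply: eq_bigr => i' _; apply: eq_bigr => j' _; rewrite mulrC !tvmul_gen /basis.
case: (path2 i' j' =P path2 i j) => [[_ -> ->]|ne]; first by rewrite eqxx.
by move/eqP: ne; rewrite eq_sym => /negbTE ->; rewrite !if_same !mulr0.
Qed.

Lemma tens_subl u u' v pq : tens eR (zsub u u') v pq = tens eR u v pq - tens eR u' v pq.
Proof. by rewrite /tens /zsub; case: ifP; rewrite ?subr0 // mulrBl. Qed.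

Lemma tens_addr u v v' pq : tens eR u (zadd v v') pq = tens eR u v pq + tens eR u v' pq.
Proof. by rewrite /tens /zadd; case: ifP; rewrite ?addr0 // mulrDr. Qed.

Lemma tens_comb_inVV n (X R : 'I_n -> TV k m) pq : (forall a, inVV eL eR (R a)) ->
  \sum_(i < m) \sum_(j < m)
     tens eR (zcomb (fun a => R a (path2 i j)) X) (tvmul eR (gen eL i) (gen eL j)) pq
  = \sum_(a < n) tens eR (X a) (R a) pq.
Proof.
move=> R_VV; case: pq => p q; rewrite /tens /=; case: (tgt eR p == tgt eR q); last first.
  by rewrite [RHS]big1 // big1 // => i _; rewrite big1.
under [RHS]eq_bigr => a _ do rewrite (inVV_decomp_gen_mul q (R_VV a)) big_distrr.
rewrite [RHS]exchange_big; apply: eq_bigr => i _ /=.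
under [RHS]eq_bigr => a _ do rewrite big_distrr.
rewrite [RHS]exchange_big; apply: eq_bigr => j _ /=.
by rewrite zcombE big_distrl; apply: eq_bigr => a _; rewrite mulrCA mulrA.
Qed.

Lemma tens_comb_inV n (X y : 'I_n -> TV k m) pq : (forall a, inV eL eR (y a)) ->
  \sum_(i < m) tens eR (zcomb (fun a => coefV eL i (y a)) X) (gen eL i) pq
  = \sum_(a < n) tens eR (X a) (y a) pq.
Proof.
move=> y_V; case: pq => p q; rewrite /tens /=.
case: (tgt eR p == tgt eR q); last by rewrite !big1.
under [RHS]eq_bigr => a _ do rewrite (inV_decomp q (y_V a)) big_distrr.
rewrite [RHS]exchange_big; apply: eq_bigr => i _ /=.
by rewrite zcombE big_distrl; apply: eq_bigr => a _; rewrite mulrCA mulrA.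
Qed.

Lemma zspan_tens_inVV_l (K : TT k m -> Prop) x y : inVV eL eR x ->
  (forall i j, eR i == eL j -> zspan K (tens eR (basis (path2 i j)) y)) ->
  zspan K (tens eR x y).
Proof.
move=> x_VV Kxy.
have Kterm i j : zspan K (zscale (x (path2 i j)) (tens eR (basis (path2 i j)) y)).
  have [ij|ij] := boolP (eR i == eL j); first exact/zspan_scale/Kxy.
  apply: zspan_ext (zspan0 _) => pq.
  by rewrite /zscale (supported_on_out x_VV) ?mul0r // valid_path2 (negbTE ij).
have Ksum : zspan K (\big[zadd/zzero]_(i < m) \big[zadd/zzero]_(j < m)
                   zscale (x (path2 i j)) (tens eR (basis (path2 i j)) y)).
  by apply: zspan_sum => i; apply: zspan_sum => j; apply: Kterm.
apply: zspan_ext Ksum => -[p q]; rewrite zsum2E /zscale /tens /=.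
case: (tgt eR p == tgt eR q); last first.
  by rewrite big1 // => i _; apply: big1 => j _; rewrite mulr0.
rewrite (inVV_decomp p x_VV) big_distrl; apply: eq_bigr => i _ /=.
by rewrite big_distrl; apply: eq_bigr => j _ /=; rewrite mulrA.
Qed.

Lemma zspan_tens_inVV_r (K : TT k m -> Prop) x y : inVV eL eR y ->
  (forall i j, eR i == eL j -> zspan K (tens eR x (basis (path2 i j)))) ->
  zspan K (tens eR x y).
Proof.
move=> y_VV Kxy.
have Kterm i j : zspan K (zscale (y (path2 i j)) (tens eR x (basis (path2 i j)))).
  have [ij|ij] := boolP (eR i == eL j); first exact/zspan_scale/Kxy.
  apply: zspan_ext (zspan0 _) => pq.
  by rewrite /zscale (supported_on_out y_VV) ?mul0r // valid_path2 (negbTE ij).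
have Ksum : zspan K (\big[zadd/zzero]_(i < m) \big[zadd/zzero]_(j < m)
                   zscale (y (path2 i j)) (tens eR x (basis (path2 i j)))).
  by apply: zspan_sum => i; apply: zspan_sum => j; apply: Kterm.
apply: zspan_ext Ksum => -[p q]; rewrite zsum2E /zscale /tens /=.
case: (tgt eR p == tgt eR q); last first.
  by rewrite big1 // => i _; apply: big1 => j _; rewrite mulr0.
rewrite (inVV_decomp q y_VV) big_distrr; apply: eq_bigr => i _ /=.
by rewrite big_distrr; apply: eq_bigr => j _ /=; rewrite mulrCA.
Qed.

End PathAlgebra.

Section LinearQuadraticAlgebra.
Variables (k m : nat) (eL eR : 'I_m -> 'I_k).
Variables (I : TV k m -> Prop) (phi : TV k m -> TV k m).

Lemma Dual_ideal_of_perp y : inVV eL eR y -> (forall r, I r -> pairing eL y r = 0) ->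
  Dual_ideal eL eR I y.
Proof.
move=> y_VV y_perp.
have Dsum : Dual_ideal eL eR I (\big[zadd/zzero]_(e < k) \big[zadd/zzero]_(e' < k)
    tvmul eR (basis (e, [::])) (tvmul eR y (basis (e', [::])))).
  apply: zspan_sum => e; apply: zspan_sum => e'; apply: zspan_gen.
  by exists (e, [::]), (e', [::]), y; split.
by apply: zspan_ext Dsum => p; rewrite zsum2E -idempotent_decomposition.
Qed.

Lemma zero_tens_Dual_ideal y z : Dual_ideal eL eR I y -> inVV eL eR z ->
  zero_in_BdualB eL eR I phi (tens eR y z).
Proof.
move=> Dy z_VV; apply: (zspan_tens_inVV_r z_VV) => i j ij.
by apply: zspan_gen; left; exists y, (path2 eL i j); rewrite valid_path2.
Qed.

Lemma zero_tens_Dual_ideal_gen y i : Dual_ideal eL eR I y ->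
  zero_in_BdualB eL eR I phi (tens eR y (gen eL i)).
Proof.
by move=> Dy; apply: zspan_gen; left; exists y, (eL i, [:: i]); rewrite /valid /= eqxx.
Qed.

Lemma zero_tens_J_ideal x y : inVV eL eR x -> J_ideal eL eR I phi y ->
  zero_in_BdualB eL eR I phi (tens eR x y).
Proof.
move=> x_VV Jy; apply: (zspan_tens_inVV_l x_VV) => i j ij.
by apply: zspan_gen; right; exists (path2 eL i j), y; rewrite valid_path2.
Qed.

Hypothesis I_VV : forall r, I r -> inVV eL eR r.
Hypothesis phi_V : forall r, I r -> inV eL eR (phi r).
Hypothesis J_graph : forall x y, inV eL eR x -> inVV eL eR y ->
  (J_ideal eL eR I phi (tvadd x y) <-> (I y /\ tveq (phi y) x)).

Lemma J_ideal_graph r : I r -> J_ideal eL eR I phi (tvadd (phi r) r).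
Proof. by move=> Ir; apply/J_graph; auto. Qed.

Lemma I_tveq r r' : I r -> tveq r r' -> I r' /\ tveq (phi r') (phi r).
Proof.
move=> Ir E; apply/J_graph; first exact: phi_V.
  by move=> p; rewrite -E; apply: I_VV.
by apply: zspan_ext (J_ideal_graph Ir) => p; rewrite /tvadd E.
Qed.

Lemma I_phi_comb n c (R : 'I_n -> TV k m) : (forall a, I (R a)) ->
  I (zcomb c R) /\ tveq (phi (zcomb c R)) (zcomb c (fun a => phi (R a))).
Proof.
move=> IR; apply/J_graph.
- by apply: supported_on_comb => a; apply: phi_V.
- by apply: supported_on_comb => a; apply: I_VV.
have J_comb : J_ideal eL eR I phi (zcomb c (fun a => tvadd (phi (R a)) (R a))).
  by apply: zspan_comb => a; apply: J_ideal_graph.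
apply: zspan_ext J_comb => p.
by rewrite /tvadd !zcombE -big_split; apply: eq_bigr => a _; rewrite mulrDr.
Qed.

Lemma I_of_J_ideal x y : inV eL eR x -> inVV eL eR y ->
  J_ideal eL eR I phi (tvadd x y) -> I y.
Proof. by move=> x_V y_VV /(J_graph x_V y_VV)[]. Qed.

Lemma I_subgroup : zsubgroup I.
Proof.
split=> [|r s Ir Is|c r Ir].
- apply: (I_of_J_ideal (supported_on0 _) (supported_on0 _)).
  by apply: zspan_ext (zspan0 _) => p; rewrite /tvadd addr0.
- apply: (I_of_J_ideal (supported_onD (phi_V Ir) (phi_V Is))
                       (supported_onD (I_VV Ir) (I_VV Is))).
  apply: zspan_ext (zspan_add (J_ideal_graph Ir) (J_ideal_graph Is)) => p.
  by rewrite /tvadd /zadd addrACA.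
- apply: (I_of_J_ideal (supported_onZ (c := c) (phi_V Ir))
                       (supported_onZ (c := c) (I_VV Ir))).
  apply: zspan_ext (zspan_scale c (J_ideal_graph Ir)) => p.
  by rewrite /tvadd /zscale mulrDr.
Qed.

Hypothesis I_dual_onto : forall f : TV k m -> int,
  (forall r s, I r -> I s -> f (tvadd r s) = f r + f s) ->
  exists x, inVV eL eR x /\ forall r, I r -> pairing eL x r = f r.

Lemma I_dual_coordinates : exists n (X R : 'I_n -> TV k m),
  [/\ forall a, inVV eL eR (X a), forall a, I (R a)
    & forall r, I r -> tveq r (zcomb (fun a => pairing eL (X a) r) R)].
Proof.
pose Q := [seq path2 eL ij.1 ij.2 | ij <- enum {: 'I_m * 'I_m}].
have I_Q r p : I r -> p \notin Q -> r p = 0.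
  move=> Ir pQ; apply: (supported_on_out (I_VV Ir)); apply: contra pQ.
  case: p => e w /andP[+ size2]; case: w size2 => [|i [|j [|? ?]]] //= _.
  by move=> /andP[/eqP /= <- _]; apply/mapP; exists (i, j); rewrite ?mem_enum.
have [n [F [R [FD IR Fdec]]]] := zsubgroup_coordinates I_subgroup I_Q.
have [X HX] := functional_choice _ (fun a => I_dual_onto (FD a)).
exists n, X, R; split=> [a|//|r Ir p]; first by case: (HX a).
by rewrite zcombE Fdec //; apply: eq_bigr => a _; rewrite (HX a).2.
Qed.

Section Defects.
Variables (n : nat) (X R : 'I_n -> TV k m).
Hypotheses (X_VV : forall a, inVV eL eR (X a)) (I_R : forall a, I (R a)).
Hypothesis R_dual : forall r, I r -> tveq r (zcomb (fun a => pairing eL (X a) r) R).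

(* In a left tensor factor, [tvmul eR (gen eL i) (gen eL j)] stands for b_i^* b_j^*:
   T(V^* ) and T(V) share their basis of paths. *)
Definition canonical_defect i j : TV k m :=
  zsub (tvmul eR (gen eL i) (gen eL j)) (zcomb (fun a => R a (path2 eL i j)) X).

Lemma Dual_ideal_canonical_defect i j : Dual_ideal eL eR I (canonical_defect i j).
Proof.
apply: Dual_ideal_of_perp => [|r Ir].
  by apply: supported_onB; [apply: inVV_gen_mul | apply: supported_on_comb].
rewrite pairingB (pairing_gen_mul _ _ (I_VV Ir)) (pairing_comb eL) (R_dual Ir) zcombE.
by under eq_bigr => a _ do rewrite mulrC; rewrite subrr.
Qed.

Variable psi : 'I_m -> TV k m.
Hypothesis psi_VV : forall i, inVV eL eR (psi i).
Hypothesis psi_phi : forall i r, I r -> pairing eL (psi i) r = coefV eL i (phi r).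

Definition differential_defect i : TV k m :=
  zsub (psi i) (zcomb (fun a => coefV eL i (phi (R a))) X).

Lemma Dual_ideal_differential_defect i : Dual_ideal eL eR I (differential_defect i).
Proof.
apply: Dual_ideal_of_perp => [|r Ir].
  by apply: supported_onB; [apply: psi_VV | apply: supported_on_comb].
have [_ phi_r] := I_tveq Ir (R_dual Ir).
have [_ phi_comb] := I_phi_comb (fun a => pairing eL (X a) r) I_R.
rewrite pairingB psi_phi // (pairing_comb eL) /coefV -phi_r phi_comb zcombE.
by under eq_bigr => a _ do rewrite mulrC; rewrite subrr.
Qed.

Lemma dd_relation_vanishes : zero_in_BdualB eL eR I phi
  (ttadd (\big[@ttadd k m/@tt0 k m]_(i < m) tens eR (psi i) (gen eL i))
         (\big[@ttadd k m/@tt0 k m]_(i < m) \big[@ttadd k m/@tt0 k m]_(j < m)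
            tens eR (tvmul eR (gen eL i) (gen eL j)) (tvmul eR (gen eL i) (gen eL j)))).
Proof.
have K_sum : zero_in_BdualB eL eR I phi (zadd
    (\big[zadd/zzero]_(i < m) \big[zadd/zzero]_(j < m)
       tens eR (canonical_defect i j) (tvmul eR (gen eL i) (gen eL j)))
    (zadd (\big[zadd/zzero]_(a < n) tens eR (X a) (tvadd (phi (R a)) (R a)))
          (\big[zadd/zzero]_(i < m) tens eR (differential_defect i) (gen eL i)))).
  apply: zspan_add; [|apply: zspan_add].
  - apply: zspan_sum => i; apply: zspan_sum => j; apply: zero_tens_Dual_ideal.
      exact: Dual_ideal_canonical_defect.
    exact: inVV_gen_mul.
  - by apply: zspan_sum => a; apply: zero_tens_J_ideal => //; apply: J_ideal_graph.
  - apply: zspan_sum => i; apply: zero_tens_Dual_ideal_gen.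
    exact: Dual_ideal_differential_defect.
apply: zspan_ext K_sum => pq; rewrite /zadd /ttadd !zsum2E !zsumE.
under eq_bigr => i _ do under eq_bigr => j _ do rewrite tens_subl.
under [in X in _ + (X + _)]eq_bigr => a _ do rewrite tens_addr.
under [in X in _ + (_ + X)]eq_bigr => i _ do rewrite tens_subl.
rewrite big_split /= !sumrB.
under eq_bigr => i _ do rewrite sumrB.
rewrite sumrB (tens_comb_inVV X pq (fun a => I_VV (I_R a))).
have /= -> := tens_comb_inV X pq (fun a => phi_V (I_R a)).
ring.
Qed.

End Defects.

End LinearQuadraticAlgebra.

Theorem proposition4p25
  (k m : nat) (eL eR : 'I_m -> 'I_k)
  (* the linear-quadratic relations: J_2 = { phi(r) + r | r in I } *)
  (I : TV k m -> Prop) (phi : TV k m -> TV k m)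
  (HI : forall r, I r -> inVV eL eR r)
  (Hphi : forall r, I r -> inV eL eR (phi r))
  (* J_2 = J \cap (V (+) V(x)V) where J = T(V) J_2 T(V) *)
  (HJ2 : forall x y, inV eL eR x -> inVV eL eR y ->
     (J_ideal eL eR I phi (tvadd x y) <-> (I y /\ tveq (phi y) x)))
  (* J \cap V = 0 *)
  (HJV : forall x, inV eL eR x -> J_ideal eL eR I phi x -> tveq x (@tv0 k m))
  (* intrinsic grading *)
  (G : Type) (gmul : G -> G -> G) (deg : 'I_m -> G)
  (HIhom : forall y, I y -> exists l : seq (TV k m),
     (forall z, List.In z l -> I z /\ exists g, homog2 eL eR gmul deg g z) /\
     forall p, y p = \sum_(z <- l) z p)
  (Hphideg : forall y g, I y -> homog2 eL eR gmul deg g y -> homog1 eL eR deg g (phi y))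
  (* as in the paper: (V^*(x)_R V^* )/I^perp is identified with I^* = Hom(I,Z)
     by restriction (restriction is injective by definition of I^perp; the
     identification asserts it is onto) *)
  (Hident : forall f : TV k m -> int,
     (forall r s, I r -> I s -> f (tvadd r s) = f r + f s) ->
     exists x, inVV eL eR x /\ forall r, I r -> pairing eL x r = f r)
  (* mu_1(b_i^* ) = phi^*(b_i^* ) in (V^*(x)V^* )/I^perp = I^*, represented by psi i *)
  (psi : 'I_m -> TV k m)
  (Hpsi : forall i, inVV eL eR (psi i) /\
     forall r, I r -> pairing eL (psi i) r = coefV eL i (phi r))
  (* the differential on B^op is zero *)
  (mu1B : TV k m -> TV k m) (Hmu1B : forall c, mu1B c = @tv0 k m) :
  zero_in_BdualB eL eR I phi
    (ttadd
      (\big[@ttadd k m/@tt0 k m]_(i < m)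
          ttscale ((-1) ^+ hdegB) (tens eR (psi i) (gen eL i)))
    (ttadd
      (\big[@ttadd k m/@tt0 k m]_(i < m) tens eR (gen eL i) (mu1B (gen eL i)))
      (\big[@ttadd k m/@tt0 k m]_(i < m) \big[@ttadd k m/@tt0 k m]_(j < m)
          ttscale ((-1) ^+ (hdegBdual * hdegB))
            (tens eR (tvmul eR (gen eL i) (gen eL j))
                     (tvmul eR (gen eL i) (gen eL j)))))).
Proof.
have [n [X [R [X_VV I_R R_dual]]]] := I_dual_coordinates HI Hphi HJ2 Hident.
have K_dd := dd_relation_vanishes HI Hphi HJ2 X_VV I_R R_dual
  (fun i => (Hpsi i).1) (fun i => (Hpsi i).2).
apply: zspan_ext K_dd => pq.
rewrite /ttadd /ttscale /hdegB /hdegBdual muln0 expr0 !zsum2E !zsumE /=.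
rewrite [X in _ = _ + (X + _)]big1 ?add0r => [|i _]; last first.
  by rewrite Hmu1B /tens /tv0 mulr0 if_same.
under [X in _ = X + _]eq_bigr => i _ do rewrite mul1r.
by under [X in _ = _ + X]eq_bigr => i _ do under eq_bigr => j _ do rewrite mul1r.
Qed.
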